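(* Let $H=\sum_{i=1}^d\epsilon_i|\epsilon_i\rangle\langle\epsilon_i|$ be a Hamiltonian on $\mathbb{C}^d$ with orthonormal eigenbasis $\{|\epsilon_i\rangle\}$ and $\epsilon_1\le\cdots\le\epsilon_d$. Let $X$ be a (true, unknown) density matrix and $p_i=\mathrm{tr}(|\epsilon_i\rangle\langle\epsilon_i|X)$, $i=1,\dots,d$, and let $$\Omega_{\mathcal{I}}=\{\omega\succeq0:\ \mathrm{tr}(\omega)=1,\ \mathrm{tr}(\omega|\epsilon_i\rangle\langle\epsilon_i|)=p_i\ \forall i\}.$$ Let $\rho^\ast=\sum_i p_i|\epsilon_i\rangle\langle\epsilon_i|$. Then $\rho^\ast\in\Omega_{\mathcal{I}}$, the ergotropy is minimized over $\Omega_{\mathcal{I}}$ at $\rho^\ast$, and $$\min_{\omega\in\Omega_{\mathcal{I}}}\mathcal{E}(\omega,H)=\mathcal{E}(\rho^\ast,H)=\sum_{i=1}^dp_i\epsilon_i-\sum_{i=1}^dp_i^{\downarrow}\epsilon_i=\mathcal{E}_{IC}(X),$$ where $(p_1^\downarrow,\dots,p_d^\downarrow)$ is the nonincreasing rearrangement of $(p_1,\dots,p_d)$.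
   Context: The ergotropy of a state $\rho$ with Hamiltonian $H$ is $\mathcal{E}(\rho,H)=\max_{U}\big[\mathrm{tr}(\rho H)-\mathrm{tr}(HU\rho U^\dagger)\big]$ over $d\times d$ unitaries $U$. The incoherent ergotropy $\mathcal{E}_{IC}(X)$ of a state $X$ is the ergotropy of its dephased state in the energy eigenbasis, i.e. $\mathcal{E}_{IC}(X)=\mathcal{E}\big(\sum_i\langle\epsilon_i|X|\epsilon_i\rangle\,|\epsilon_i\rangle\langle\epsilon_i|,H\big)$. *)

From HB Require Import structures.
From mathcomp Require Import all_boot all_order all_algebra.
From mathcomp Require Import complex.
From mathcomp Require Import boolp classical_sets reals.
Set Implicit Arguments. Unset Strict Implicit. Unset Printing Implicit Defensive.
Import Order.TTheory GRing.Theory Num.Theory.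
Local Open Scope ring_scope.
Local Open Scope complex_scope.
Local Open Scope classical_set_scope.

Section Defs.
Variable R : realType.
Notation C := R[i].

Definition adj (m n : nat) (A : 'M[C]_(m, n)) : 'M[C]_(n, m) :=
  (map_mx Num.conj A)^T.

Definition unitary (d : nat) (U : 'M[C]_d) : Prop := U *m adj U = 1%:M.

Definition hermitian (d : nat) (A : 'M[C]_d) : Prop := adj A = A.

Definition psd (d : nat) (A : 'M[C]_d) : Prop :=
  hermitian A /\ forall v : 'cV[C]_d, 0 <= (adj v *m A *m v) 0 0.

Definition density (d : nat) (A : 'M[C]_d) : Prop := psd A /\ \tr A = 1.

(* ergotropy  E(rho,H) = max_U [ tr(rho H) - tr(H U rho U^dag) ]  (real part;
   these traces are real for Hermitian rho, H).  Defined as a supremum. *)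
Definition ergotropy (d : nat) (rho H : 'M[C]_d) : R :=
  sup [set e : R | exists U : 'M[C]_d, unitary U /\
        e = complex.Re (\tr (rho *m H)) - complex.Re (\tr (H *m U *m rho *m adj U))].

Definition proj (d : nat) (V : 'M[C]_d) (i : 'I_d) : 'M[C]_d :=
  col i V *m adj (col i V).

Definition dephase (d : nat) (V X : 'M[C]_d) : 'M[C]_d :=
  \sum_(i < d) (adj (col i V) *m X *m col i V) 0 0 *: proj V i.

Definition ergotropy_IC (d : nat) (V H X : 'M[C]_d) : R :=
  ergotropy (dephase V X) H.

Definition p_desc (d : nat) (p : 'I_d -> R) (i : 'I_d) : R :=
  nth 0 (sort (fun x y : R => y <= x) [seq p j | j <- enum 'I_d]) i.

End Defs.

(* Every state w with energy populations p has energy sum_i p_i eps_i, and the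
   unitary that permutes the energy eigenbasis so that the largest populations
   sit on the lowest levels brings it down to sum_i p^dec_i eps_i; hence
   E(w) >= sum_i p_i eps_i - sum_i p^dec_i eps_i.  For the dephased state rho
   no unitary does better: the populations of U rho U^dag are B p with
   B_jk = |<e_j|U|e_k>|^2 doubly stochastic, and for increasing eps and
   decreasing r, sum_j r_j eps_j <= sum_j (B r)_j eps_j.  This rearrangement
   inequality follows from a potential F with F_j - F_k <= (eps_j - eps_k) r_k,
   since sum_jk B_jk (F_j - F_k) = 0. *)

From Pilot Require Import Defs.
From HB Require Import structures.
From mathcomp Require Import all_boot all_order all_algebra.
From mathcomp Require Import complex.
From mathcomp Require Import boolp classical_sets reals.
From mathcomp Require Import fingroup perm ring lra.
Import Order.TTheory GRing.Theory Num.Theory.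
Set Implicit Arguments. Unset Strict Implicit. Unset Printing Implicit Defensive.
Local Open Scope ring_scope.
Local Open Scope complex_scope.

Section Adjoint.
Variable R : realType.
Local Notation C := R[i].

Lemma adjM m n p (A : 'M[C]_(m, n)) (B : 'M[C]_(n, p)) :
  adj (A *m B) = adj B *m adj A.
Proof. by rewrite /adj map_mxM trmx_mul. Qed.

Lemma adjK m n (A : 'M[C]_(m, n)) : adj (adj A) = A.
Proof. by apply/matrixP => i j; rewrite !mxE conjCK. Qed.

Lemma adj1 n : adj (1%:M : 'M[C]_n) = 1%:M.
Proof. by apply/matrixP => i j; rewrite !mxE eq_sym conjC_nat. Qed.

Lemma adj_col n (A : 'M[C]_n) i : adj (col i A) = row i (adj A).
Proof. by apply/matrixP => a b; rewrite !mxE. Qed.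

Lemma adj_perm_mx n (s : 'S_n) : adj (perm_mx s : 'M[C]_n) = perm_mx s^-1.
Proof. by rewrite /adj map_perm_mx tr_perm_mx. Qed.

Lemma adj_diag_real n (q : 'I_n -> R) :
  adj (diag_mx (\row_i (q i)%:C)) = diag_mx (\row_i (q i)%:C).
Proof.
apply/matrixP => a b; rewrite !mxE.
have [->|_] := eqVneq b a; first by rewrite !mulr1n; exact: conjc_real.
by rewrite !mulr0n conjC0.
Qed.

Lemma unitary_mulC n (U : 'M[C]_n) : unitary U -> adj U *m U = 1%:M.
Proof. exact: mulmx1C. Qed.

Lemma unitary1 n : unitary (1%:M : 'M[C]_n).
Proof. by rewrite /unitary adj1 mulmx1. Qed.

Lemma unitary_adj n (U : 'M[C]_n) : unitary U -> unitary (adj U).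
Proof. by move=> /unitary_mulC; rewrite /unitary adjK. Qed.

Lemma unitaryM n (U W : 'M[C]_n) : unitary U -> unitary W -> unitary (U *m W).
Proof.
by move=> hU hW; rewrite /unitary adjM mulmxA -(mulmxA U) hW mulmx1 hU.
Qed.

Lemma unitary_perm_mx n (s : 'S_n) : unitary (perm_mx s : 'M[C]_n).
Proof. by rewrite /unitary adj_perm_mx -perm_mxM mulgV perm_mx1. Qed.

End Adjoint.

Section Basis.
Variables (R : realType) (n : nat).
Local Notation C := R[i].
Implicit Types (V U M : 'M[C]_n) (c : 'I_n -> C).

Definition in_basis V M := adj V *m M *m V.

Lemma in_basis_diagE V M i :
  in_basis V M i i = (adj (col i V) *m M *m col i V) 0 0.
Proof.
rewrite adj_col !mxE; apply: eq_bigr => k _; rewrite !mxE; congr (_ * _).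
by apply: eq_bigr => l _; rewrite !mxE.
Qed.

Lemma tr_mul_proj V M i : \tr (M *m proj V i) = in_basis V M i i.
Proof.
by rewrite /proj mulmxA mxtrace_mulC mulmxA /mxtrace big_ord1 in_basis_diagE.
Qed.

Lemma tr_proj_mul V M i : \tr (proj V i *m M) = in_basis V M i i.
Proof. by rewrite mxtrace_mulC tr_mul_proj. Qed.

Lemma tr_mul_sum_proj V M c :
  \tr (M *m \sum_i c i *: proj V i) = \sum_i c i * in_basis V M i i.
Proof.
rewrite mulmx_sumr raddf_sum; apply: eq_bigr => i _.
by rewrite -scalemxAr /= mxtraceZ tr_mul_proj.
Qed.

Lemma tr_sum_proj_mul V M c :
  \tr ((\sum_i c i *: proj V i) *m M) = \sum_i c i * in_basis V M i i.
Proof. by rewrite mxtrace_mulC tr_mul_sum_proj. Qed.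

Lemma sum_proj_diag V c :
  \sum_i c i *: proj V i = V *m diag_mx (\row_i c i) *m adj V.
Proof.
apply/matrixP => a b; rewrite summxE !mxE; apply: eq_bigr => i _.
rewrite mul_mx_diag !mxE big_ord1 !mxE.
by rewrite mulrA [c i * _]mulrC.
Qed.

Section Unitary.
Variable V : 'M[C]_n.
Hypothesis unitaryV : unitary V.

Lemma mxtrace_in_basis M : \tr (in_basis V M) = \tr M.
Proof. by rewrite mxtrace_mulC mulmxA unitaryV mul1mx. Qed.

Lemma in_basis_conj_adj A : in_basis V (V *m A *m adj V) = A.
Proof.
by rewrite /in_basis !mulmxA (unitary_mulC unitaryV) mul1mx -mulmxA
  (unitary_mulC unitaryV) mulmx1.
Qed.

Lemma in_basis_sum_proj c :
  in_basis V (\sum_i c i *: proj V i) = diag_mx (\row_i c i).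
Proof. by rewrite sum_proj_diag in_basis_conj_adj. Qed.

Lemma in_basis_conj U M :
  in_basis V (U *m M *m adj U) =
  in_basis V U *m in_basis V M *m adj (in_basis V U).
Proof.
by rewrite /in_basis !adjM adjK !mulmxA -!(mulmxA _ V (adj V)) unitaryV !mulmx1.
Qed.

Lemma unitary_in_basis U : unitary U -> unitary (in_basis V U).
Proof.
by move=> hU; apply: unitaryM => //; apply: unitaryM => //; apply: unitary_adj.
Qed.

End Unitary.
End Basis.

Section States.
Variables (R : realType) (n : nat).
Local Notation C := R[i].
Implicit Types (V U M : 'M[C]_n).

Lemma psd_conj U M : psd M -> psd (U *m M *m adj U).
Proof.
move=> [hM qM]; split; first by rewrite /Defs.hermitian !adjM adjK hM mulmxA.
move=> v; have -> : adj v *m (U *m M *m adj U) *m v =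
                    adj (adj U *m v) *m M *m (adj U *m v).
  by rewrite adjM adjK !mulmxA.
exact: qM.
Qed.

Lemma density_conj U M : unitary U -> density M -> density (U *m M *m adj U).
Proof.
move=> hU [pM trM]; split; first exact: psd_conj.
by rewrite mxtrace_mulC mulmxA (unitary_mulC hU) mul1mx.
Qed.

Lemma psd_diag_mx (q : 'I_n -> R) :
  (forall i, 0 <= q i) -> psd (diag_mx (\row_i (q i)%:C)).
Proof.
move=> q_ge0; split; first exact: adj_diag_real.
move=> v; rewrite mxE; apply: sumr_ge0 => k _.
rewrite mul_mx_diag !mxE mulrAC.
by apply: mulr_ge0; [rewrite mulrC; apply: mul_conjC_ge0 | rewrite ler0c].
Qed.

Definition population V M i : R := complex.Re (in_basis V M i i).

Lemma populationE V M i : psd M -> (population V M i)%:C = in_basis V M i i.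
Proof.
by move=> [_ qM]; apply: RRe_real; apply: ger0_real; rewrite in_basis_diagE.
Qed.

Lemma population_ge0 V M i : psd M -> 0 <= population V M i.
Proof.
by move=> pM; rewrite -ler0c populationE // in_basis_diagE; case: pM.
Qed.

Lemma sum_population V M :
  unitary V -> density M -> \sum_i population V M i = 1.
Proof.
move=> hV [pM trM]; apply: complexI.
rewrite rmorph_sum (eq_bigr _ (fun i _ => populationE V i pM)) /=.
by rewrite -(mxtrace_in_basis hV M) in trM.
Qed.

Lemma tr_sum_proj_mul_population V M (eps : 'I_n -> R) : psd M ->
  \tr ((\sum_i (eps i)%:C *: proj V i) *m M) =
  (\sum_i eps i * population V M i)%:C.
Proof.
move=> pM; rewrite tr_sum_proj_mul rmorph_sum; apply: eq_bigr => i _.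
by rewrite rmorphM /= populationE.
Qed.

Lemma density_sum_proj V (q : 'I_n -> R) :
  unitary V -> (forall i, 0 <= q i) -> \sum_i q i = 1 ->
  density (\sum_i (q i)%:C *: proj V i).
Proof.
move=> hV q_ge0 q_sum1; split.
  by rewrite sum_proj_diag; apply/psd_conj/psd_diag_mx.
rewrite -(mxtrace_in_basis hV) in_basis_sum_proj // mxtrace_diag.
rewrite -(rmorph1 (real_complex R)) -q_sum1 rmorph_sum.
by apply: eq_bigr => i _; rewrite mxE.
Qed.

End States.

Section Rearrangement.
Variable R : realDomainType.

Definition doubly_stochastic n (B : 'M[R]_n) : Prop :=
  [/\ forall j k, 0 <= B j k, forall j, \sum_k B j k = 1
    & forall k, \sum_j B j k = 1].

Lemma doubly_stochastic_col_perm n (s : 'S_n) (B : 'M[R]_n) :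
  doubly_stochastic B -> doubly_stochastic (col_perm s B).
Proof.
move=> [B_ge0 row1 col1]; split => [j k|j|k].
- by rewrite mxE.
- rewrite -(row1 j) [RHS](reindex_inj (@perm_inj _ s)).
  by apply: eq_bigr => k _; rewrite mxE.
- by rewrite -(col1 (s k)); apply: eq_bigr => j _; rewrite mxE.
Qed.

Lemma monotone_potential n (e r : 'I_n -> R) :
  {homo e : i j / (i <= j)%N >-> i <= j} ->
  {homo r : i j / (i <= j)%N >-> j <= i} ->
  exists F : 'I_n -> R, forall j k, F j - F k <= (e j - e k) * r k.
Proof.
case: n e r => [|m] e r e_incr r_decr; first by exists (fun=> 0) => -[].
pose e' k := e (inord k); pose r' k := r (inord k).
have inord_mono a b : (a <= b <= m)%N ->
    ((inord a : 'I_m.+1) <= (inord b : 'I_m.+1))%N.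
  by case/andP=> ab bm; rewrite !inordK ?ltnS // (leq_trans ab bm).
have e'_incr a b : (a <= b <= m)%N -> e' a <= e' b.
  by move=> /inord_mono; apply: e_incr.
have r'_decr a b : (a <= b <= m)%N -> r' b <= r' a.
  by move=> /inord_mono; apply: r_decr.
pose F b := \sum_(0 <= i < b) (e' i.+1 - e' i) * r' i.
have sandwich a b : (a <= b <= m)%N ->
    (e' b - e' a) * r' b <= F b - F a <= (e' b - e' a) * r' a.
  case/andP=> ab bm.
  have -> : F b - F a = \sum_(a <= i < b) (e' i.+1 - e' i) * r' i.
    by rewrite /F (big_cat_nat (leq0n a) ab) addrC addKr.
  rewrite -(telescope_sumr _ ab) !mulr_suml.
  have inc_ge0 i : (i < b)%N -> 0 <= e' i.+1 - e' i.
    by move=> ib; rewrite subr_ge0 e'_incr // leqnSn (leq_trans ib bm).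
  apply/andP; split; apply: ler_sum_nat => i /andP[ai ib];
    apply: (ler_wpM2l (inc_ge0 i ib)).
  - by apply: r'_decr; rewrite (ltnW ib).
  - by apply: r'_decr; rewrite ai (ltnW (leq_trans ib bm)).
exists (fun k : 'I_m.+1 => F k) => j k.
have eE (x : 'I_m.+1) : e x = e' x by rewrite /e' inord_val.
have rE (x : 'I_m.+1) : r x = r' x by rewrite /r' inord_val.
rewrite !eE rE; have jm := ltn_ord j; have km := ltn_ord k.
case: (leqP k j) => [kj | jk].
  by case/andP: (sandwich k j ltac:(by rewrite kj)).
have /andP[+ _] := sandwich j k ltac:(by rewrite ltnW).
lra.
Qed.

Lemma doubly_stochastic_rearrangement n (B : 'M[R]_n) (e r : 'I_n -> R) :
  doubly_stochastic B ->
  {homo e : i j / (i <= j)%N >-> i <= j} ->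
  {homo r : i j / (i <= j)%N >-> j <= i} ->
  \sum_j r j * e j <= \sum_j (\sum_k B j k * r k) * e j.
Proof.
move=> [B_ge0 row1 col1] e_incr r_decr.
have [F F_pot] := monotone_potential e_incr r_decr.
have transport : \sum_j (\sum_k B j k * r k) * e j - \sum_j r j * e j =
    \sum_j \sum_k B j k * ((e j - e k) * r k).
  rewrite [RHS](eq_bigr (fun j =>
      (\sum_k B j k * r k) * e j - \sum_k B j k * (r k * e k))); last first.
    by move=> j _; rewrite mulr_suml -sumrB; apply: eq_bigr => k _; ring.
  rewrite sumrB exchange_big /=; congr (_ - _); apply: eq_bigr => k _.
  by rewrite -mulr_suml col1 mul1r.
have balance : \sum_j \sum_k B j k * (F j - F k) = 0.
  rewrite (eq_bigr (fun j => F j * \sum_k B j k - \sum_k B j k * F k));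
    last first.
    by move=> j _; rewrite mulr_sumr -sumrB; apply: eq_bigr => k _; ring.
  rewrite sumrB exchange_big /=; apply/eqP; rewrite subr_eq0; apply/eqP.
  by apply: eq_bigr => k _; rewrite row1 mulr1 -mulr_suml col1 mul1r.
rewrite -subr_ge0 transport -[X in X <= _]balance.
by apply: ler_sum => j _; apply: ler_sum => k _; apply: ler_wpM2l.
Qed.

End Rearrangement.

Lemma p_desc_perm (R : realType) d (p : 'I_d -> R) :
  exists s : 'S_d, p_desc p =1 p \o s /\
    {homo p \o s : i j / (i <= j)%N >-> j <= i}.
Proof.
pose t := [tuple p j | j < d].
pose l := sort (fun x y : R => y <= x) [seq p j | j <- enum 'I_d].
have lt : [seq p j | j <- enum 'I_d] = t.
  by rewrite -[RHS]map_tnth_enum; apply: eq_map => j; rewrite tnth_mktuple.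
have pl : perm_eq l t by rewrite /l perm_sort lt.
case/tuple_permP: pl => s ls.
have sz : size l = d by rewrite ls size_map size_enum_ord.
have nl (j : 'I_d) : nth 0 l j = p (s j).
  by rewrite ls -(tnth_nth 0 [tuple tnth t (s i) | i < d]) !tnth_mktuple.
exists s; split => [j|i j ij]; rewrite /= -!nl //.
have l_sorted : sorted (fun x y : R => y <= x) l.
  by apply: sort_sorted => x y; exact: le_total.
apply: (sorted_leq_nth _ _ 0 l_sorted) => //; rewrite ?inE ?sz //.
by move=> a b c ba cb; exact: le_trans cb ba.
Qed.

Lemma doubly_stochastic_p_desc (R : realType) n (B : 'M[R]_n)
    (e r : 'I_n -> R) :
  doubly_stochastic B -> {homo e : i j / (i <= j)%N >-> i <= j} ->
  \sum_j p_desc r j * e j <= \sum_j (\sum_k B j k * r k) * e j.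
Proof.
move=> dsB e_incr; have [s [r_s r_s_decr]] := p_desc_perm r.
rewrite (eq_bigr (fun j => r (s j) * e j)) => [|j _]; last by rewrite r_s.
have -> : \sum_j (\sum_k B j k * r k) * e j =
          \sum_j (\sum_k col_perm s B j k * r (s k)) * e j.
  apply: eq_bigr => j _; congr (_ * _).
  rewrite [LHS](reindex_inj (@perm_inj _ s)).
  by apply: eq_bigr => k _; rewrite mxE.
apply: doubly_stochastic_rearrangement r_s_decr => //.
exact: doubly_stochastic_col_perm.
Qed.

Section Unistochastic.
Variables (R : realType) (n : nat).
Local Notation C := R[i].

Definition unistochastic (W : 'M[C]_n) : 'M[R]_n :=
  \matrix_(j, k) ((complex.Re (W j k)) ^+ 2 + (complex.Im (W j k)) ^+ 2).

Lemma unistochasticE (W : 'M[C]_n) j k :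
  (unistochastic W j k)%:C = W j k * (W j k)^*.
Proof. by rewrite mxE add_Re2_Im2 normCK. Qed.

Lemma unistochastic_doubly_stochastic (W : 'M[C]_n) :
  unitary W -> doubly_stochastic (unistochastic W).
Proof.
move=> hW; have hW' := unitary_mulC hW.
have sum1 (A B : 'M[C]_n) (f : 'I_n -> R) j : A *m B = 1%:M ->
    (forall k, (f k)%:C = A j k * B k j) -> \sum_k f k = 1.
  move=> AB1 fE; apply: complexI.
  rewrite rmorph_sum (eq_bigr _ (fun k _ => fE k)).
  by have := congr1 (fun M : 'M[C]_n => M j j) AB1; rewrite !mxE eqxx mulr1n.
split => [j k|j|k].
- by rewrite mxE addr_ge0 // sqr_ge0.
- apply: (sum1 _ _ (fun k => unistochastic W j k) j hW) => k.
  by rewrite unistochasticE !mxE.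
- apply: (sum1 _ _ (fun j => unistochastic W j k) k hW') => j.
  by rewrite unistochasticE !mxE mulrC.
Qed.

Lemma conj_diag_mx_entry (W : 'M[C]_n) (q : 'I_n -> R) j :
  (W *m diag_mx (\row_k (q k)%:C) *m adj W) j j =
  (\sum_k unistochastic W j k * q k)%:C.
Proof.
rewrite mxE rmorph_sum; apply: eq_bigr => k _.
by rewrite rmorphM /= unistochasticE mul_mx_diag !mxE mulrAC.
Qed.

Lemma conj_perm_mx_entry (s : 'S_n) (A : 'M[C]_n) j :
  (perm_mx s *m A *m adj (perm_mx s)) j j = A (s j) (s j).
Proof. by rewrite adj_perm_mx -col_permE -row_permE !mxE. Qed.

End Unistochastic.

Section ErgotropyBounds.
Variables (R : realType) (n : nat) (rho H : 'M[R[i]]_n) (c : R).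
Hypothesis passive_ge :
  forall U, unitary U -> c <= complex.Re (\tr (H *m U *m rho *m adj U)).

Let work U :=
  complex.Re (\tr (rho *m H)) - complex.Re (\tr (H *m U *m rho *m adj U)).

Let work_le U : unitary U -> work U <= complex.Re (\tr (rho *m H)) - c.
Proof. by move=> hU; rewrite lerD2l lerN2 passive_ge. Qed.

Lemma ergotropy_ge U : unitary U -> work U <= ergotropy rho H.
Proof.
move=> hU; apply: sup_upper_bound; last by exists U.
split; first by exists (work U), U.
by exists (complex.Re (\tr (rho *m H)) - c) => _ [U' [hU' ->]]; exact: work_le.
Qed.

Lemma ergotropy_le : ergotropy rho H <= complex.Re (\tr (rho *m H)) - c.
Proof.
apply: ge_sup; first by exists (work 1%:M), 1%:M; split => //; exact: unitary1.
by move=> _ [U [hU ->]]; exact: work_le.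
Qed.

End ErgotropyBounds.

Section IncoherentErgotropy.
Variables (R : realType) (d : nat) (V : 'M[R[i]]_d) (eps : 'I_d -> R).
Hypothesis unitaryV : unitary V.

Let H := \sum_(i < d) (eps i)%:C *: proj V i.

Let H_conj (U M : 'M[R[i]]_d) : H *m U *m M *m adj U = H *m (U *m M *m adj U).
Proof. by rewrite !mulmxA. Qed.

(* A crude bound, only used to keep the set whose supremum defines [ergotropy]
   bounded above. *)
Lemma energy_conj_ge w U : density w -> unitary U ->
  - \sum_i `|eps i| <= complex.Re (\tr (H *m U *m w *m adj U)).
Proof.
move=> dw hU; have dw' := density_conj hU dw; have [psd_w' _] := dw'.
rewrite H_conj /H tr_sum_proj_mul_population //=.
rewrite -[X in - X]mulr1 -(sum_population unitaryV dw').
rewrite mulr_sumr -sumrN; apply: ler_sum => i _; rewrite -mulNr.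
apply: ler_wpM2r; first exact: population_ge0.
rewrite lerNl (le_trans (ler_norm _)) // normrN (bigD1 i) //= lerDl.
by apply: sumr_ge0 => k _.
Qed.

Lemma ergotropy_ge_incoherent w (q : 'I_d -> R) :
  density w -> (forall i, in_basis V w i i = (q i)%:C) ->
  \sum_i q i * eps i - \sum_i p_desc q i * eps i <= ergotropy w H.
Proof.
move=> dw w_pop; have [s [q_s _]] := p_desc_perm q.
pose U := V *m perm_mx s *m adj V.
have unitaryU : unitary U.
  apply: unitaryM; last exact: unitary_adj.
  by apply: unitaryM => //; apply: unitary_perm_mx.
have active : complex.Re (\tr (w *m H)) = \sum_i q i * eps i.
  rewrite /H tr_mul_sum_proj (eq_bigr (fun i => (q i * eps i)%:C)) => [|i _].
    by rewrite -rmorph_sum.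
  by rewrite w_pop -rmorphM mulrC.
have passive :
    complex.Re (\tr (H *m U *m w *m adj U)) = \sum_i p_desc q i * eps i.
  rewrite H_conj /H tr_sum_proj_mul in_basis_conj // in_basis_conj_adj //.
  rewrite (eq_bigr (fun j => (p_desc q j * eps j)%:C)) => [|j _].
    by rewrite -rmorph_sum.
  by rewrite conj_perm_mx_entry w_pop q_s -rmorphM mulrC.
rewrite -active -passive; apply: ergotropy_ge unitaryU => U' hU'.
exact: energy_conj_ge.
Qed.

Lemma ergotropy_sum_proj_le (q : 'I_d -> R) :
  {homo eps : i j / (i <= j)%N >-> i <= j} ->
  (forall i, 0 <= q i) -> \sum_i q i = 1 ->
  ergotropy (\sum_i (q i)%:C *: proj V i) H <=
  \sum_i q i * eps i - \sum_i p_desc q i * eps i.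
Proof.
move=> eps_incr q_ge0 q_sum1; set rho := \sum_i _ *: _.
have active : complex.Re (\tr (rho *m H)) = \sum_i q i * eps i.
  rewrite /H tr_mul_sum_proj in_basis_sum_proj //.
  rewrite (eq_bigr (fun i => (q i * eps i)%:C)) => [|i _].
    by rewrite -rmorph_sum.
  by rewrite !mxE eqxx mulr1n -rmorphM mulrC.
rewrite -active; apply: ergotropy_le => U hU.
rewrite H_conj /H tr_sum_proj_mul in_basis_conj // in_basis_sum_proj //.
rewrite (eq_bigr (fun j =>
  ((\sum_k unistochastic (in_basis V U) j k * q k) * eps j)%:C)).
  rewrite -rmorph_sum /=; apply: doubly_stochastic_p_desc eps_incr.
  exact/unistochastic_doubly_stochastic/unitary_in_basis.
by move=> j _; rewrite conj_diag_mx_entry -rmorphM mulrC.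
Qed.

End IncoherentErgotropy.

Theorem lemma1 (R : realType) (d : nat) (V : 'M[R[i]]_d) (eps : 'I_d -> R)
    (X : 'M[R[i]]_d) :
  unitary V ->
  (forall i j : 'I_d, (i <= j)%N -> eps i <= eps j) ->
  density X ->
  let H := \sum_(i < d) (eps i)%:C *: proj V i in
  let p := fun i : 'I_d => complex.Re (\tr (proj V i *m X)) in
  let Omega := fun w : 'M[R[i]]_d =>
    psd w /\ \tr w = 1 /\ forall i : 'I_d, \tr (w *m proj V i) = (p i)%:C in
  let rho := \sum_(i < d) (p i)%:C *: proj V i in
  [/\ Omega rho,
      forall w, Omega w -> ergotropy rho H <= ergotropy w H,
      ergotropy rho H = \sum_(i < d) p i * eps i - \sum_(i < d) p_desc p i * eps i
    & ergotropy rho H = ergotropy_IC V H X].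
Proof.
move=> unitaryV eps_incr densX H p Omega rho.
have [psd_X _] := densX.
have pE i : (p i)%:C = in_basis V X i i by rewrite /p tr_proj_mul populationE.
have p_ge0 i : 0 <= p i by rewrite /p tr_proj_mul population_ge0.
have p_sum1 : \sum_i p i = 1.
  rewrite -(sum_population unitaryV densX).
  by apply: eq_bigr => i _; rewrite /p tr_proj_mul.
have [psd_rho tr_rho] := density_sum_proj unitaryV p_ge0 p_sum1.
have Omega_rho : Omega rho.
  split; first exact: psd_rho.
  split; first exact: tr_rho.
  by move=> i; rewrite tr_mul_proj in_basis_sum_proj // !mxE eqxx mulr1n.
have lower w : Omega w ->
    \sum_i p i * eps i - \sum_i p_desc p i * eps i <= ergotropy w H.
  move=> [psd_w [tr_w w_pop]]; apply: ergotropy_ge_incoherent => // i.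
  by rewrite -tr_mul_proj.
have upper := ergotropy_sum_proj_le unitaryV eps_incr p_ge0 p_sum1.
split.
- exact: Omega_rho.
- by move=> w /lower; apply: le_trans.
- by apply/le_anti; rewrite upper lower.
- rewrite /ergotropy_IC /dephase; congr ergotropy; apply: eq_bigr => i _.
  by rewrite -in_basis_diagE pE.
Qed.
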